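(* Let $y$ be a Lyndon word with $|y|>1$, written as $y=x^kzb$ where $x$ is a Lyndon word, $k\ge 1$, $|x|$ is the smallest period of $x^kz$, $z$ is a proper prefix of $x$ (possibly empty), $a$ is the letter such that $za$ is a prefix of $x$, and $b$ is a letter with $a<b$. For $e=0,1,\dots,k$ let $$P_e=\{\,w \text{ prefix of } y \;:\; e|x|<|w|<\min\{(e+1)|x|,\,|y|\}\,\}.$$ Then for all $0\le e<f\le k$, every $u\in P_e$ and every $v\in P_f$ satisfy $u\prec v$.
   Context: Lexicographic order $<$ on finite and infinite words: $u<v$ if $u$ is a proper prefix of $v$, or $u=ras$, $v=rbt$ with letters $a<b$. A Lyndon word is a non-empty word strictly smaller than each of its proper non-empty suffixes. Infinite ordering: for non-empty words $u,v$, $u\prec v$ iff $u^\infty<v^\infty$, or $u^\infty=v^\infty$ and $|u|>|v|$, where $u^\infty=uuu\cdots$. A period of a word $w$ is an integer $p\ge1$ with $w[i]=w[i+p]$ whenever both are defined. *)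

From HB Require Import structures.
From mathcomp Require Import all_boot all_order.
Set Implicit Arguments. Unset Strict Implicit. Unset Printing Implicit Defensive.
Import Order.TTheory.
Local Open Scope order_scope.

Section Words.
Variables (disp : Order.disp_t) (A : orderType disp).

Definition lexlt (u v : seq A) : Prop :=
  (prefix u v /\ u <> v) \/
  exists (r s t : seq A) (a b : A), u = r ++ a :: s /\ v = r ++ b :: t /\ a < b.

Definition lyndon (w : seq A) : Prop :=
  w <> [::] /\ forall i, 0 < i < size w -> lexlt w (drop i w).

Definition is_period (p : nat) (w : seq A) : Prop :=
  (1 <= p)%N /\ forall i, (i + p < size w)%N -> onth w i = onth w (i + p).

Definition smallest_period (p : nat) (w : seq A) : Prop :=
  is_period p w /\ forall q, is_period q w -> (p <= q)%N.

Definition wpow (u : seq A) (k : nat) : seq A := flatten (nseq k u).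

(* Infinite word u^oo = uuu..., as a sequence of letters (None only if u is empty). *)
Definition ipow (u : seq A) : nat -> option A :=
  match u with
  | [::] => fun _ => None
  | c :: _ => fun i => Some (nth c u (i %% size u))
  end.

Definition ilexlt (s t : nat -> option A) : Prop :=
  exists n, (forall i, (i < n)%N -> s i = t i) /\
    exists a b, s n = Some a /\ t n = Some b /\ a < b.

Definition iprec (u v : seq A) : Prop :=
  ilexlt (ipow u) (ipow v) \/
  ((forall i, ipow u i = ipow v i) /\ (size v < size u)%N).

Definition Pset (x y : seq A) (e : nat) (w : seq A) : Prop :=
  prefix w y /\ (e * size x < size w)%N /\
  (size w < minn (e.+1 * size x) (size y))%N.

End Words.

From HB Require Import structures.
From mathcomp Require Import all_boot all_order.
From mathcomp Require Import zify.
Import Order.TTheory.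

(* Let p = |x| and write s_i = x[i mod p] for the letters of
   x^oo.  Every word of P_e is a prefix of x^k z, hence a prefix of x^oo.
   Take u in P_e with m = |u|; then e p < m < (e+1) p, so m is not a
   multiple of p.  Since x is Lyndon, x < x[(m mod p)..] yields a first
   index d < p - (m mod p) with s_d < s_(d+m) and s_i = s_(i+m) before it.
   A general fact on infinite words then shows that u^oo = (s_(i mod m))_i
   agrees with x^oo below m + d and is smaller at m + d.  Finally
   m + d < (e+1) p <= f p < |v| for v in P_f, so v^oo coincides with x^oo
   up to m + d, and u^oo < v^oo. *)

Section LyndonPrefixPowers.
Variables (disp : Order.disp_t) (A : orderType disp).
Set Implicit Arguments.
Unset Strict Implicit.
Implicit Types (x w : seq A) (s : nat -> A).

(* A Lyndon word is smaller than each proper suffix by a genuine letter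
   mismatch: the suffix is too short to have x as a prefix. *)
Lemma lyndon_suffix_mismatch x (c : A) q : lyndon x -> (0 < q < size x)%N ->
  exists d, [/\ (d + q < size x)%N,
    forall i, (i < d)%N -> nth c x i = nth c x (q + i)
    & (nth c x d < nth c x (q + d))%O].
Proof.
move=> [_ ltx_drop] q_bounds; have /andP [q_gt0 lt_qx] := q_bounds.
case: (ltx_drop q q_bounds) => [[/size_prefix le_x_drop _] | [r [s [t [a [b [def_x [def_drop ltab]]]]]]]].
  by rewrite size_drop leqNgt ltn_subrL q_gt0 (ltn_trans q_gt0 lt_qx) in le_x_drop.
have size_drop_q : (size x - q = size r + (size t).+1)%N.
  by rewrite -size_drop def_drop size_cat.
exists (size r); split; first by lia.
  by move=> i lt_i_r; rewrite -nth_drop def_drop {1}def_x !nth_cat lt_i_r.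
by rewrite -nth_drop def_drop {1}def_x !nth_cat ltnn subnn.
Qed.

Lemma prefix_power_lt s m d : (0 < m)%N ->
  (forall i, (i < d)%N -> s i = s (i + m)) -> (s d < s (d + m))%O ->
  (forall i, (i < m + d)%N -> s (i %% m) = s i) /\ (s ((m + d) %% m) < s (m + d))%O.
Proof.
move=> m_gt0 shift_eq shift_lt.
have agree : forall i, (i < m + d)%N -> s (i %% m) = s i.
  elim/ltn_ind=> i IHi lt_i_md; case: (ltnP i m) => [lt_im | le_mi].
    by rewrite modn_small.
  have def_i : i = (i - m) + m by rewrite subnK.
  rewrite def_i modnDr IHi; try lia.
  by rewrite (shift_eq (i - m)) //; lia.
split=> //; rewrite modnDl agree; last by lia.
by rewrite addnC.
Qed.

Definition inf_letter (c : A) x (i : nat) : A := nth c x (i %% size x).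

Lemma lyndon_shift_lt x (c : A) m : lyndon x -> m %% size x != 0%N ->
  exists d, [/\ (d + m %% size x < size x)%N,
    forall i, (i < d)%N -> inf_letter c x i = inf_letter c x (i + m)
    & (inf_letter c x d < inf_letter c x (d + m))%O].
Proof.
move=> x_lyndon m_mod.
have x_gt0 : (0 < size x)%N by rewrite lt0n size_eq0; apply/eqP; case: x_lyndon.
have q_bounds : (0 < m %% size x < size x)%N by rewrite lt0n m_mod ltn_pmod.
have [d [d_bound agree lt_d]] := lyndon_suffix_mismatch c x_lyndon q_bounds.
have letter_shift i : (i + m %% size x < size x)%N ->
    inf_letter c x i = nth c x i /\ inf_letter c x (i + m) = nth c x (m %% size x + i).
  move=> i_bound; rewrite /inf_letter -modnDmr (modn_small i_bound) addnC.
  by rewrite modn_small //; lia.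
exists d; split=> //.
  by move=> i lt_id; have [-> ->] := letter_shift i ltac:(lia); apply: agree.
by have [-> ->] := letter_shift d d_bound.
Qed.

Lemma nth_wpow_cat x z k (c : A) i : prefix z x ->
  (i < size (wpow x k ++ z))%N -> nth c (wpow x k ++ z) i = inf_letter c x i.
Proof.
move=> /prefixP [t def_x]; rewrite /inf_letter.
elim: k i => [|k IHk] i /=.
  move=> lt_iz; rewrite modn_small def_x ?nth_cat ?lt_iz //.
  by rewrite size_cat; lia.
have -> : wpow x k.+1 = x ++ wpow x k by [].
rewrite -catA nth_cat size_cat => lt_i; case: ltnP => [lt_ix | le_xi].
  by rewrite modn_small.
rewrite IHk -?(modnDr (i - size x)) ?subnK //.
by rewrite size_cat in lt_i *; lia.
Qed.

Lemma ipow_nth w (c : A) i : w <> [::] -> ipow w i = Some (nth c w (i %% size w)).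
Proof.
case: w => [//|c0 w] _ /=.
by rewrite (set_nth_default c) // ltn_pmod.
Qed.

Lemma Pset_ipow x y z k (b c : A) e w :
  y = wpow x k ++ z ++ [:: b] -> prefix z x -> Pset x y e w ->
  forall i, ipow w i = Some (inf_letter c x (i %% size w)).
Proof.
move=> def_y z_x [/prefixP [t def_w] [lt_ew lt_wy]] i.
rewrite (@ipow_nth _ c); last by move=> w0; rewrite w0 in lt_ew.
have lt_iw : (i %% size w < size w)%N by rewrite ltn_pmod //; lia.
have lt_i_xkz : (i %% size w < size (wpow x k ++ z))%N.
  by move: lt_wy; rewrite def_y catA size_cat /= leq_min; lia.
congr Some; rewrite -(nth_wpow_cat c z_x lt_i_xkz).
transitivity (nth c y (i %% size w)); first by rewrite def_w nth_cat lt_iw.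
by rewrite def_y catA nth_cat lt_i_xkz.
Qed.

End LyndonPrefixPowers.

Theorem mainTheorem5 (disp : Order.disp_t) (A : orderType disp)
  (y x z : seq A) (k : nat) (a b : A) :
  lyndon y -> (1 < size y)%N ->
  y = wpow x k ++ z ++ [:: b] ->
  lyndon x -> (1 <= k)%N ->
  smallest_period (size x) (wpow x k ++ z) ->
  prefix z x -> (size z < size x)%N ->
  prefix (rcons z a) x ->
  (a < b)%O ->
  forall e f : nat, (e < f)%N -> (f <= k)%N ->
  forall u v : seq A, Pset x y e u -> Pset x y f v -> iprec u v.
Proof.
move=> _ _ def_y x_lyndon _ _ z_x _ _ _ e f lt_ef _ u v Pu Pv.
have [[_ [lt_em lt_m]] [_ [lt_fv _]]] := (Pu, Pv).
set p := size x in lt_em lt_m lt_fv *; set m := size u in lt_em lt_m *.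
pose s := inf_letter a x.
have le_ep_fp : (e.+1 * p <= f * p)%N by rewrite leq_mul2r lt_ef orbT.
have m_mod : m %% p = (m - e * p)%N.
  have def_m : m = (e * p + (m - e * p))%N by rewrite subnKC // ltnW.
  rewrite {1}def_m modnMDl modn_small //.
  by rewrite leq_min mulSn in lt_m; lia.
have [d [d_bound shift_eq shift_lt]] : exists d, [/\ (d + m %% p < p)%N,
    forall i, (i < d)%N -> s i = s (i + m) & (s d < s (d + m))%O].
  by apply: lyndon_shift_lt; rewrite // m_mod; lia.
have [agree lt_md] := prefix_power_lt (leq_ltn_trans (leq0n _) lt_em) shift_eq shift_lt.
have lt_md_v : (m + d < size v)%N by rewrite m_mod leq_min mulSn in d_bound lt_m; lia.
have ipow_v i : (i < size v)%N -> ipow v i = Some (s i).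
  by move=> lt_iv; rewrite (Pset_ipow a def_y z_x Pv) modn_small.
left; exists (m + d); split.
  move=> i lt_i; rewrite (Pset_ipow a def_y z_x Pu) -/m -/s agree ?ipow_v //; lia.
exists (s ((m + d) %% m)), (s (m + d)).
by rewrite (Pset_ipow a def_y z_x Pu) -/m -/s ipow_v.
Qed.
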